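(* Let $L>0$, $\tau>0$ and let $Z_1,\dots,Z_m$ be random variables with $\max_{1\le j\le m}\|Z_j\|_{\Psi_2(\cdot;L)}\le\tau$. Then for all $t>0$, $$P\Big(\max_{1\le j\le m}|Z_j|\ge \frac{\tau}{L}\Big(h_2^{-1}(L^2t/2)+h_2^{-1}\big(L^2\log(1+m)/2\big)\Big)\Big)\le 2e^{-t}.$$
   Context: For $x\ge 0$ let $h_2(x)=(1+x)\log(1+x)-x$, an increasing bijection of $[0,\infty)$ onto itself, with inverse $h_2^{-1}$. For $L>0$ let $\Psi_2(x;L)=\exp\big(\frac{2}{L^2}h_2(Lx)\big)-1$. The Orlicz norm is $\|X\|_{\Psi}=\inf\{c>0: E\Psi(|X|/c)\le 1\}$. *)

From HB Require Import structures.
From mathcomp Require Import all_boot all_order all_algebra.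
From mathcomp Require Import all_classical all_reals all_analysis.
Set Implicit Arguments. Unset Strict Implicit. Unset Printing Implicit Defensive.
Import Order.TTheory GRing.Theory Num.Theory.
Local Open Scope classical_set_scope.
Local Open Scope ring_scope.

Definition h2 {R : realType} (x : R) : R := (1 + x) * ln (1 + x) - x.

(* h_2^{-1}: the inverse of the bijection h_2 : [0,oo) -> [0,oo);
   h2inv y is the (unique) x >= 0 with h2 x = y (default 0 if none). *)
Definition h2inv {R : realType} (y : R) : R :=
  xget 0 [set x : R | 0 <= x /\ h2 x = y].

Definition Psi2 {R : realType} (L x : R) : R :=
  expR (2 / L ^+ 2 * h2 (L * x)) - 1.

(* Orlicz norm ||X||_Psi = inf { c > 0 : E Psi(|X|/c) <= 1 } (in \bar R; inf of empty set = +oo) *)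
Definition orlicz_norm {R : realType} {d} {T : measurableType d}
  (P : probability T R) (Psi : R -> R) (X : T -> R) : \bar R :=
  ereal_inf [set (c%:E) | c in [set c : R | 0 < c /\
     (\int[P]_x (Psi (`|X x| / c))%:E <= 1)%E]].

From HB Require Import structures.
From mathcomp Require Import all_boot all_order all_algebra.
From mathcomp Require Import all_classical all_reals all_analysis.
From mathcomp Require Import ring lra.
Import Order.TTheory GRing.Theory Num.Theory.
Import numFieldNormedType.Exports.
Local Open Scope classical_set_scope.
Local Open Scope ring_scope.

(* Markov's inequality for Psi(|Z|/c) bounds P(|Z| >= s) by 2 / (Psi(s/c) + 1) for
   every c above the Orlicz norm; letting c decrease to tau gives the sub-Poisson
   tail P(|Z| >= tau y / L) <= 2 exp(-2 h_2(y) / L^2).  For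
   y = h_2^{-1}(L^2 t / 2) + h_2^{-1}(L^2 log(1+m) / 2), superadditivity of h_2
   (convex, h_2(0) = 0) makes the exponent at least t + log(1+m), and the union
   bound over the m variables costs a factor m <= 1 + m. *)

Section h2_theory.
Context {R : realType}.
Implicit Types a b p q u v y z : R.

Lemma mulr_lnB_le p q : 0 < p -> 0 < q -> q * (ln p - ln q) <= p - q.
Proof.
move=> p0 q0; rewrite -ln_div ?posrE //.
have pq0 : 0 < p / q by exact: divr_gt0.
have : ln (p / q) <= p / q - 1.
  by have := @le_ln1Dx R (p / q - 1); rewrite subrKC; apply; lra.
move/(ler_wpM2l (ltW q0)); rewrite mulrBr mulrCA divff ?gt_eqF //.
by rewrite !mulr1.
Qed.

Lemma h2_0 : h2 (0 : R) = 0.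
Proof. by rewrite /h2 addr0 ln1 mulr0 subr0. Qed.

Lemma h2_le z y : 0 <= z -> z <= y -> h2 z <= h2 y.
Proof.
move=> z0 zy; rewrite /h2.
have := mulr_lnB_le (1 + z) (1 + y) ltac:(lra) ltac:(lra).
have : 0 <= ln (1 + z) by rewrite ln_ge0 // lerDl.
nra.
Qed.

Lemma h2_ge0 y : 0 <= y -> 0 <= h2 y.
Proof. by move=> y0; rewrite -h2_0 h2_le. Qed.

Lemma h2B_le z y : 0 <= z -> z <= y -> h2 y - h2 z <= (y - z) * y.
Proof.
move=> z0 zy; rewrite /h2.
have := mulr_lnB_le (1 + y) (1 + z) ltac:(lra) ltac:(lra).
have := @le_ln1Dx R y ltac:(lra).
nra.
Qed.

Lemma h2_superadditive a b : 0 <= a -> 0 <= b -> h2 a + h2 b <= h2 (a + b).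
Proof.
wlog ba : a b / b <= a => [hwlog a0 b0|a0 b0].
  by case: (leP b a) => [|/ltW] ?; [|rewrite addrC [a + b]addrC]; apply: hwlog.
rewrite /h2 [1 + (a + b)]addrA.
have := mulr_lnB_le (1 + a) (1 + a + b) ltac:(lra) ltac:(lra).
have := mulr_lnB_le (1 + b) (1 + a + b) ltac:(lra) ltac:(lra).
have := @le_ln1Dx R b ltac:(lra).
set A := ln (1 + a + b); set B := ln (1 + a); set C := ln (1 + b) => lnb_le hb ha.
have w0 : 0 < 1 + a + b by lra.
suff : 0 <= (1 + a + b) * ((1 + a + b) * A - (1 + a) * B - (1 + b) * C).
  by rewrite pmulr_rge0 //; lra.
nra.
Qed.

Lemma h2_div1D_ge y e : 0 <= y -> 0 <= e -> h2 y - e * y ^+ 2 <= h2 (y / (1 + e)).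
Proof.
move=> y0 e0; have e1 : 0 < 1 + e by lra.
have zy : y / (1 + e) <= y by rewrite ler_pdivrMr // ler_peMr // lerDl.
have := h2B_le _ _ (divr_ge0 y0 (ltW e1)) zy.
have : (y - y / (1 + e)) * y <= e * y ^+ 2.
  rewrite -subr_ge0 [X in 0 <= X](_ : _ = e ^+ 2 * y ^+ 2 / (1 + e)); last by field; lra.
  by rewrite divr_ge0 ?mulr_ge0 ?sqr_ge0 // ltW.
lra.
Qed.

Lemma h2_continuous y : -1 < y -> {for y, continuous (@h2 R)}.
Proof.
move=> y1; apply: continuousB; last exact: cvg_id.
have cD1 : {for y, continuous (fun x : R => 1 + x)}.
  by apply: continuousD; [exact: cvg_cst | exact: cvg_id].
apply: continuousM => //; apply: continuous_comp => //.
by apply: continuous_ln; rewrite /=; lra.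
Qed.

Lemma h2_expR2_ge v : 0 <= v -> v <= h2 (v + expR 2).
Proof.
move=> v0; rewrite /h2.
have e0 := expR_gt0 (2 : R).
have : 2 <= ln (1 + (v + expR 2)).
  by rewrite -[leLHS](expRK (2:R)) ler_ln ?posrE; lra.
nra.
Qed.

Lemma h2_surjective v : 0 <= v -> exists2 x, 0 <= x & h2 x = v.
Proof.
move=> v0; have e0 := expR_gt0 (2 : R).
have hcont : {within `[0, v + expR 2], continuous (@h2 R)}.
  apply: continuous_in_subspaceT => y; rewrite inE /= in_itv /= => /andP[y0 _].
  by apply: h2_continuous; lra.
have hv : Num.min (h2 0) (h2 (v + expR 2)) <= v <= Num.max (h2 0) (h2 (v + expR 2)).
  by rewrite h2_0 ge_min le_max v0 h2_expR2_ge ?orbT.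
have [x] := IVT (ltW (ltr_wpDl v0 e0)) hcont hv.
by rewrite in_itv /= => /andP[x0 _] <-; exists x.
Qed.

Lemma h2inv_ge0 v : 0 <= h2inv v.
Proof.
rewrite /h2inv; case: xgetP => [x _ []//|_]; exact: lexx.
Qed.

Lemma h2invK v : 0 <= v -> h2 (h2inv v) = v.
Proof.
move=> /h2_surjective[x x0 hx].
by have [] := xgetPex 0 (P := [set x : R | 0 <= x /\ h2 x = v]) (ex_intro _ x (conj x0 hx)).
Qed.

Lemma h2inv_gt0 v : 0 < v -> 0 < h2inv v.
Proof.
move=> v0; rewrite lt_neqAle h2inv_ge0 andbT; apply/eqP => h.
by move: (h2invK v (ltW v0)); rewrite -h h2_0 => /eqP; rewrite eq_sym gt_eqF.
Qed.

Lemma h2_h2invD_ge u v : 0 <= u -> 0 <= v -> u + v <= h2 (h2inv u + h2inv v).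
Proof.
move=> u0 v0; rewrite -{1}(h2invK u u0) -{1}(h2invK v v0).
by rewrite h2_superadditive ?h2inv_ge0.
Qed.

Lemma measurable_h2 : measurable_fun [set: R] (@h2 R).
Proof.
have mD1 : measurable_fun [set: R] (fun x : R => 1 + x).
  exact: measurable_realfun.measurable_funD.
apply: measurable_realfun.measurable_funB => //.
apply: measurable_realfun.measurable_funM => //.
by apply: measurableT_comp mD1; exact: measurable_realfun.measurable_ln.
Qed.

End h2_theory.

Section expR_bounds.
Context {R : realType}.

Lemma lee_pmul_expR_gt0 (x : \bar R) b : 0 < b ->
  (forall k, 0 < k -> (x <= (b * expR k)%:E)%E) -> (x <= b%:E)%E.
Proof.
move=> b0 hx; apply/lee_addgt0Pr => e e0.
have eb0 : 0 < e / b by exact: divr_gt0.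
have k0 : 0 < ln (1 + e / b) by rewrite ln_gt0 // ltrDl.
apply: le_trans (hx _ k0) _; rewrite -EFinD lee_fin.
by rewrite lnK ?posrE ?addr_gt0 // mulrDr mulr1 mulrCA divff ?gt_eqF // mulr1.
Qed.

Lemma natr_mul_expRN_le (m : nat) (t A : R) :
  t + ln (1 + m%:R) <= A -> m%:R * expR (- A) <= expR (- t).
Proof.
move=> tA; have m1 : 0 < 1 + m%:R :> R by rewrite ltr_wpDr.
have : expR (- A) <= expR (- t) / (1 + m%:R).
  by rewrite -[1 + m%:R]lnK ?posrE // -expRB ler_expR; lra.
move/(ler_wpM2l (ler0n _ m))/le_trans; apply.
by rewrite mulrCA ger_pMr ?expR_gt0 // ler_pdivrMr // mul1r lerDr.
Qed.

End expR_bounds.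

Section orlicz_tail.
Context {R : realType} {d : measure_display} {T : measurableType d}.
Context {P : probability T R} {Psi : R -> R}.
Hypotheses (mPsi : measurable_fun [set: R] Psi)
  (Psi_ge0 : forall r, 0 <= r -> 0 <= Psi r)
  (Psi_nd : {in Num.nneg &, {homo Psi : x y / x <= y}}).

Lemma orlicz_markov (X : {RV P >-> R}) (c s : R) : 0 < c -> 0 < s ->
  (\int[P]_x (Psi (`|X x| / c))%:E <= 1)%E ->
  ((Psi (s / c) + 1)%:E * P [set x | (s <= `|X x|)%R] <= 2)%E.
Proof.
move=> c0 s0 hint; have c_ge0 := ltW c0.
pose f r := Psi (r / c) + 1.
have mPsic : measurable_fun [set: R] (fun r => Psi (r / c)).
  by apply: measurableT_comp mPsi _; exact: measurable_realfun.mulrr_measurable.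
have f_ge0 r : 0 <= r -> 0 <= f r.
  by move=> r0; rewrite /f addr_ge0 // Psi_ge0 // divr_ge0.
have f_nd : {in Num.nneg &, {homo f : x y / x <= y}}.
  move=> x y; rewrite !nnegrE => x0 y0 xy.
  by rewrite /f lerD2r Psi_nd ?nnegrE ?divr_ge0 // ler_wpM2r // invr_ge0.
have mf : measurable_fun [set: R] f by exact: measurable_realfun.measurable_funD.
have := markov X s0 mf f_ge0 f_nd.
have -> : [set x | (s%:E <= `|(X x)%:E|)%E] = [set x | s <= `|X x|].
  by apply/seteqP; split => x /=; rewrite lee_fin.
move/le_trans; apply; rewrite unlock /=.
under eq_integral => x _ do rewrite /f EFinD.
rewrite ge0_integralD //.
- by rewrite integral_cst //= probability_setT mule1 -[2%E]/(1 + 1)%E leeD2r.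
- by move=> x _; rewrite lee_fin Psi_ge0 ?divr_ge0.
- apply/measurable_realfun.measurable_EFinP; apply: (measurableT_comp mPsic).
  by apply: measurableT_comp; [exact: measurable_realfun.normr_measurable|].
Qed.

Lemma orlicz_norm_tail (X : {RV P >-> R}) (c s : R) :
  (orlicz_norm P Psi X < c%:E)%E -> 0 < s ->
  (P [set x | (s <= `|X x|)%R] <= (2 / (Psi (s / c) + 1))%:E)%E.
Proof.
move=> /ereal_inf_lt[_ [c' [c'0 hint] <-]]; rewrite lte_fin => c'c s0.
have c0 : 0 < c by exact: lt_trans c'c.
have Psi1_gt0 : 0 < Psi (s / c) + 1 by rewrite ltr_wpDl ?Psi_ge0 ?divr_ge0 ?ltW.
rewrite mulrC EFinM lee_pdivlMl //; apply: le_trans (orlicz_markov X c' s c'0 s0 hint).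
apply: lee_wpmul2r; first exact: measure_ge0.
rewrite lee_fin lerD2r Psi_nd ?nnegrE ?divr_ge0 ?ltW //.
by rewrite ltr_pM2l // ltf_pV2 ?posrE.
Qed.

End orlicz_tail.

Section Psi2_theory.
Context {R : realType} {L : R}.
Hypothesis L0 : 0 < L.

Let coef_ge0 : 0 <= 2 / L ^+ 2.
Proof. by rewrite divr_ge0 // exprn_ge0 // ltW. Qed.

Lemma Psi2_ge0 r : 0 <= r -> 0 <= Psi2 L r.
Proof.
move=> r0; rewrite /Psi2 subr_ge0 -[leLHS]expR0 ler_expR.
by rewrite mulr_ge0 ?coef_ge0 // h2_ge0 // mulr_ge0 // ltW.
Qed.

Lemma Psi2_nondecreasing : {in Num.nneg &, {homo Psi2 L : x y / x <= y}}.
Proof.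
move=> x y; rewrite !nnegrE => x0 y0 xy; rewrite /Psi2 lerD2r ler_expR.
by rewrite ler_wpM2l ?coef_ge0 // h2_le ?mulr_ge0 ?ler_wpM2l // ltW.
Qed.

Lemma measurable_Psi2 : measurable_fun [set: R] (Psi2 L).
Proof.
apply: measurable_realfun.measurable_funB => //.
apply: measurableT_comp; first exact: measurable_realfun.measurable_expR.
apply: measurable_realfun.measurable_funM => //.
apply: measurableT_comp; first exact: measurable_h2.
exact: measurable_realfun.mulrl_measurable.
Qed.

Lemma Psi2_tail {d} {T : measurableType d} {P : probability T R} (X : {RV P >-> R})
    (tau y : R) : 0 < tau -> 0 < y -> (orlicz_norm P (Psi2 L) X <= tau%:E)%E ->
  (P [set x | (tau / L * y <= `|X x|)%R] <= (2 * expR (- (2 / L ^+ 2 * h2 y)))%:E)%E.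
Proof.
move=> tau0 y0 hX; apply: lee_pmul_expR_gt0 => [|kap kap0].
  by rewrite mulr_gt0 ?expR_gt0.
have L2 : 0 < L ^+ 2 by exact: exprn_gt0.
(* With c = tau (1 + e), the loss h2 y - h2 (y / (1 + e)) <= e y^2 is kap L^2 / 2. *)
pose e := kap * L ^+ 2 / (2 * y ^+ 2).
have e0 : 0 < e by rewrite divr_gt0 ?mulr_gt0 ?exprn_gt0.
have s0 : 0 < tau / L * y by rewrite mulr_gt0 ?divr_gt0.
have hc : (orlicz_norm P (Psi2 L) X < (tau * (1 + e))%:E)%E.
  by apply: le_lt_trans hX _; rewrite lte_fin ltr_pMr // ltrDl.
have := orlicz_norm_tail measurable_Psi2 Psi2_ge0 Psi2_nondecreasing _ _ _ hc s0.
move/le_trans; apply; rewrite lee_fin /Psi2 subrK.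
have -> : L * (tau / L * y / (tau * (1 + e))) = y / (1 + e).
  by field; rewrite !gt_eqF ?addr_gt0.
rewrite -expRN -[leRHS]mulrA -expRD ler_wpM2l // ler_expR.
have := ler_wpM2l coef_ge0 (h2_div1D_ge y e (ltW y0) (ltW e0)).
have -> : 2 / L ^+ 2 * (h2 y - e * y ^+ 2) = 2 / L ^+ 2 * h2 y - kap.
  by rewrite /e; field; rewrite !gt_eqF ?exprn_gt0.
lra.
Qed.

End Psi2_theory.

Lemma bigmax_tail_le_sum {R : realType} {d} {T : measurableType d} {P : probability T R}
    {m} (X : 'I_m -> {RV P >-> R}) (s : R) : 0 < s ->
  (P [set x | (s <= \big[Num.max/0]_(j < m) `|X j x|)%R]
   <= \sum_(j < m) P [set x | (s <= `|X j x|)%R])%E.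
Proof.
move=> s0; case: m X => [|n] X.
  rewrite big_ord0 (_ : [set x | _] = set0) ?measure0 //.
  by apply/seteqP; split => x //=; rewrite big_ord0; lra.
pose F k := [set x | (s <= `|X (inord k) x|)%R].
have mF k : measurable (F k).
  rewrite -[F k]setTI; apply: measurable_fun_le => //.
  by apply: measurableT_comp; [exact: measurable_realfun.normr_measurable|].
rewrite (eq_bigr (fun k : 'I_n.+1 => P (F k))) => [|j _]; last by rewrite /F inord_val.
have -> : [set x | (s <= \big[Num.max/0]_(j < n.+1) `|X j x|)%R] = \big[setU/set0]_(k < n.+1) F k.
  rewrite -bigcup_mkord; apply/seteqP; split => x /=.
    move=> /bigmax_geP[|[j _ hj]]; first by rewrite leNgt s0.
    by exists j => //=; rewrite /F inord_val.
  by move=> [k /= kn hk]; apply/bigmax_geP; right; exists (inord k).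
apply: content_subadditive => [k _||]; first exact: mF.
- by apply: bigsetU_measurable => k _; exact: mF.
- by [].
Qed.

Theorem lemma9 (R : realType) (d : measure_display) (T : measurableType d)
  (P : probability T R) (m : nat) (Z : 'I_m -> {RV P >-> R}) (L tau : R) :
  0 < L -> 0 < tau ->
  (forall j : 'I_m, (orlicz_norm P (Psi2 L) (Z j) <= tau%:E)%E) ->
  forall t : R, 0 < t ->
  (P [set x | (tau / L * (h2inv (L ^+ 2 * t / 2) + h2inv (L ^+ 2 * ln (1 + m%:R) / 2))
              <= \big[Num.max/0]_(j < m) `|Z j x|)%R ]
   <= (2 * expR (- t))%:E)%E.
Proof.
move=> L0 tau0 hZ t t0.
have L2 : 0 < L ^+ 2 by exact: exprn_gt0.
set y := h2inv _ + h2inv _.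
have y0 : 0 < y by rewrite ltr_pwDl ?h2inv_ge0 ?h2inv_gt0 // divr_gt0 ?mulr_gt0.
have hy : t + ln (1 + m%:R) <= 2 / L ^+ 2 * h2 y.
  have -> : t + ln (1 + m%:R) = 2 / L ^+ 2 * (L ^+ 2 * t / 2 + L ^+ 2 * ln (1 + m%:R) / 2).
    by field; rewrite gt_eqF.
  rewrite ler_wpM2l ?divr_ge0 ?(ltW L2) // h2_h2invD_ge // divr_ge0 //.
    by rewrite mulr_ge0 ?(ltW L2) ?(ltW t0).
  by rewrite mulr_ge0 ?(ltW L2) // ln_ge0 // lerDl.
have s0 : 0 < tau / L * y by rewrite mulr_gt0 ?divr_gt0.
apply: le_trans (bigmax_tail_le_sum Z _ s0) _.
apply: (@le_trans _ _ (\sum_(j < m) (2 * expR (- (2 / L ^+ 2 * h2 y)))%:E)%E).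
  by apply: lee_sum => j _; exact: Psi2_tail.
rewrite sumEFin lee_fin sumr_const card_ord -[_ *+ m]mulr_natl mulrCA ler_wpM2l //.
exact: natr_mul_expRN_le.
Qed.
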